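(* Let $k\ge1$ and let $G\in\mathfrak A$ be a graph containing no subgraph isomorphic to $\Gamma_{k+1}$. Then $G$ has the $\Gamma_k$-twin property.
   Context: $\mathfrak A$ is the class of maximal triangle-free graphs with at least two vertices containing no induced cycle of length six. (Maximal triangle-free: no triangle, and adding any new edge creates a triangle.) Andrásfai graph $\Gamma_k$: vertex set $\mathbb Z/(3k-1)\mathbb Z$, $ij$ an edge iff $i-j\in\{k,\dots,2k-1\}$ mod $3k-1$. For a subgraph $H$ of $G$, $q\in V(H)$, $q'\in V(G)$, $q'$ is an $H$-twin of $q$ if $\mathrm N(q)\cap V(H)=\mathrm N(q')\cap V(H)$ (neighbourhoods in $G$). For graphs $F,G$, $G$ has the $F$-twin property if for every $e\in E(F)$: whenever $H\subseteq G$ is isomorphic to $F$, $qz\in E(H)$ corresponds to $e$, and $q',z'$ are $H$-twins of $q,z$, then $q'z'\in E(G)$. *)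

From mathcomp Require Import all_boot.
Set Implicit Arguments. Unset Strict Implicit. Unset Printing Implicit Defensive.

Definition simple_graph (T : finType) (e : rel T) : Prop :=
  symmetric e /\ irreflexive e.

Definition triangle_free (T : finType) (e : rel T) : Prop :=
  forall x y z : T, e x y -> e y z -> e x z -> False.

(* Maximal triangle-free: triangle-free, and adding any new edge xy
   (x <> y non-adjacent) creates a triangle, i.e. x,y have a common neighbour. *)
Definition maximal_triangle_free (T : finType) (e : rel T) : Prop :=
  triangle_free e /\
  forall x y : T, x != y -> ~~ e x y -> exists z : T, e x z && e z y.

Definition subgraph_copy (U T : finType) (f : rel U) (e : rel T) (phi : U -> T) : Prop :=
  injective phi /\ forall a b : U, f a b -> e (phi a) (phi b).

Definition induced_copy (U T : finType) (f : rel U) (e : rel T) (phi : U -> T) : Prop :=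
  injective phi /\ forall a b : U, e (phi a) (phi b) = f a b.

Definition cycle6 : rel 'I_6 :=
  fun i j => let d := (i + 6 - j) %% 6 in (d == 1) || (d == 5).

Definition classA (T : finType) (e : rel T) : Prop :=
  [/\ simple_graph e, 1 < #|T|, maximal_triangle_free e &
      ~ exists phi : 'I_6 -> T, induced_copy cycle6 e phi].

Definition andrasfai (k : nat) : rel 'I_(3 * k - 1) :=
  fun i j => let n := 3 * k - 1 in
             let d := (i + n - j) %% n in (k <= d) && (d <= 2 * k - 1).
Arguments andrasfai k : clear implicits.

(* q' is an H-twin of q, where V(H) is the image of phi (neighbourhoods in G). *)
Definition H_twin (U T : finType) (e : rel T) (phi : U -> T) (q q' : T) : Prop :=
  forall w : U, e q (phi w) = e q' (phi w).

Definition twin_property (U T : finType) (f : rel U) (e : rel T) : Prop :=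
  forall phi : U -> T, subgraph_copy f e phi ->
  forall a b : U, f a b ->
  forall q' z' : T, H_twin e phi (phi a) q' -> H_twin e phi (phi b) z' -> e q' z'.

From mathcomp Require Import all_boot zify.
Set Implicit Arguments. Unset Strict Implicit. Unset Printing Implicit Defensive.

(* Rotate the copy of Gamma_k so that the twinned edge becomes {0, d} with
   k < d <= 2k-1 (swapping its ends if d = k), and suppose the twins q, z of
   0 and d are not adjacent.  Two vertices with a common neighbour are never
   adjacent, which supplies all the needed non-edges.  If d <= 2k-2, then
   q, k, d+k, z, d-k, d+1 is an induced 6-cycle.  If d = 2k-1, maximality gives
   a common neighbour w of q and z; w is adjacent to 2k, ..., 3k-2 (otherwise
   w, q, k, r, k-1, z is an induced 6-cycle), and inserting w, z, q into the
   cyclic order of Gamma_k yields a copy of Gamma_(k+1). *)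

Lemma cycle6_sym : symmetric cycle6.
Proof. by move=> [[|[|[|[|[|[|//]]]]]] ?] [[|[|[|[|[|[|//]]]]]] ?]. Qed.

Lemma cycle6_nbr_inj (i j : 'I_6) : cycle6 i =1 cycle6 j -> i = j.
Proof.
move=> h; apply: val_inj.
have := h (@Ordinal 6 0 isT); have := h (@Ordinal 6 1 isT).
have := h (@Ordinal 6 2 isT); have := h (@Ordinal 6 3 isT).
by case: i j {h} => [[|[|[|[|[|[|//]]]]]] ?] [[|[|[|[|[|[|//]]]]]] ?] /=.
Qed.

Lemma induced_cycle6 (T : finType) (e : rel T) (v0 v1 v2 v3 v4 v5 : T) :
  symmetric e -> irreflexive e ->
  e v0 v1 -> e v1 v2 -> e v2 v3 -> e v3 v4 -> e v4 v5 -> e v5 v0 ->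
  ~~ e v0 v2 -> ~~ e v0 v3 -> ~~ e v0 v4 -> ~~ e v1 v3 -> ~~ e v1 v4 ->
  ~~ e v1 v5 -> ~~ e v2 v4 -> ~~ e v2 v5 -> ~~ e v3 v5 ->
  exists phi : 'I_6 -> T, induced_copy cycle6 e phi.
Proof.
move=> e_sym e_irr *.
pose phi (i : 'I_6) := nth v0 [:: v0; v1; v2; v3; v4; v5] i.
have phiE i j : e (phi i) (phi j) = cycle6 i j.
  wlog le_ij : i j / i <= j.
    by move=> W; case: (leqP i j) => [/W // | /ltnW/W]; rewrite e_sym cycle6_sym.
  case: i j le_ij => [[|[|[|[|[|[|//]]]]]] ?] [[|[|[|[|[|[|//]]]]]] ?] //= _;
    by rewrite /phi /cycle6 /=; first [rewrite e_irr | apply: negbTE | done | rewrite e_sym].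
exists phi; split=> // i j eq_ij; apply: cycle6_nbr_inj => l.
by rewrite -!phiE eq_ij.
Qed.

Definition andrasfai_nat (k x y : nat) : bool :=
  (y + k <= x <= y + (2 * k - 1)) || (x + k <= y <= x + (2 * k - 1)).

Lemma andrasfai_natC k x y : andrasfai_nat k x y = andrasfai_nat k y x.
Proof. by rewrite /andrasfai_nat orbC. Qed.

Lemma modn_lt_double n m : m < 2 * n -> m %% n = if m < n then m else m - n.
Proof.
move=> lt_m2n; case: ltnP => [lt_mn | le_nm]; first by rewrite modn_small.
by rewrite -{1}(subnK le_nm) modnDr modn_small //; lia.
Qed.

Lemma andrasfaiE k (i j : 'I_(3 * k - 1)) : andrasfai k i j = andrasfai_nat k i j.
Proof.
have lt_i := ltn_ord i; have lt_j := ltn_ord j.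
rewrite /andrasfai /andrasfai_nat modn_lt_double; last by lia.
by case: (ltnP (i + (3 * k - 1) - j)) => /=; lia.
Qed.

Lemma andrasfai_orient k (a b : 'I_(3 * k - 1)) : andrasfai k a b ->
  (k < (b + (3 * k - 1) - a) %% (3 * k - 1) <= 2 * k - 2 \/
   (b + (3 * k - 1) - a) %% (3 * k - 1) = 2 * k - 1) \/
  (a + (3 * k - 1) - b) %% (3 * k - 1) = 2 * k - 1.
Proof.
have lt_a := ltn_ord a; have lt_b := ltn_ord b.
rewrite /andrasfai /= !modn_lt_double; try lia.
by case: (ltnP (a + (3 * k - 1) - b)); case: (ltnP (b + (3 * k - 1) - a)) => /=; lia.
Qed.

Lemma andrasfai_walk3 k x y : x < 3 * k - 1 -> y < 3 * k - 1 -> x != y ->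
  exists l m, [/\ l < 3 * k - 1, m < 3 * k - 1, andrasfai_nat k x l,
                  andrasfai_nat k l m & andrasfai_nat k m y].
Proof.
set n := 3 * k - 1 => lt_xn lt_yn neq_xy.
have [adj_xy | nadj_xy] := boolP (andrasfai_nat k x y).
  by exists y, x; split; rewrite // andrasfai_natC.
have reduce a : a < 2 * n -> exists2 r, r < n & r = a \/ r + n = a.
  move=> lt_a; case: (ltnP a n) => [lt_an | le_na]; first by exists a; [|left].
  by exists (a - n); [lia | right; lia].
move: neq_xy nadj_xy; rewrite /andrasfai_nat => neq_xy nadj_xy.
have [y_after | y_before] : (x < y < x + k \/ y + 2 * k <= x) \/ (y < x < y + k \/ x + 2 * k <= y).
  by lia.
- have [l lt_l el] := reduce (x + k) ltac:(lia).
  have [m lt_m em] := reduce (x + 2 * k) ltac:(lia).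
  by exists l, m; split=> //; lia.
- have [l lt_l el] := reduce (x + 2 * k - 1) ltac:(lia).
  have [m lt_m em] := reduce (x + k - 1) ltac:(lia).
  by exists l, m; split=> //; lia.
Qed.

Definition andrasfai_hom (T : finType) (e : rel T) (k : nat) (P : nat -> T) : Prop :=
  forall x y, x < 3 * k - 1 -> y < 3 * k - 1 -> andrasfai_nat k x y -> e (P x) (P y).

Definition twin_at (T : finType) (e : rel T) (k : nat) (P : nat -> T) (a : nat) (u : T) :=
  forall m, m < 3 * k - 1 -> e u (P m) = e (P a) (P m).

(* Any two distinct vertices of Gamma_k are joined by a walk of length 3,
   which closes into a triangle if their images coincide. *)
Lemma andrasfai_hom_inj (T : finType) (e : rel T) k P :
  triangle_free e -> andrasfai_hom e k P ->
  forall x y, x < 3 * k - 1 -> y < 3 * k - 1 -> P x = P y -> x = y.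
Proof.
move=> e_tf P_hom x y lt_x lt_y eq_Pxy; apply/eqP; apply: contraT => neq_xy.
have [l [m [lt_l lt_m xl lm my]]] := andrasfai_walk3 lt_x lt_y neq_xy.
case: (e_tf (P x) (P l) (P m)); [exact: P_hom | exact: P_hom |].
by rewrite eq_Pxy; apply: P_hom; rewrite // andrasfai_natC.
Qed.

Lemma andrasfai_hom_copy (T : finType) (e : rel T) k P :
  triangle_free e -> andrasfai_hom e k P ->
  subgraph_copy (andrasfai k) e (fun i : 'I_(3 * k - 1) => P i).
Proof.
move=> e_tf P_hom; split=> [i j /(andrasfai_hom_inj e_tf P_hom) eq_ij | i j].
  by apply: val_inj; apply: eq_ij.
by rewrite andrasfaiE; apply: P_hom.
Qed.

Lemma nonadj_common_nbr (T : finType) (e : rel T) x y c :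
  symmetric e -> triangle_free e -> e x c -> e y c -> e x y = false.
Proof.
by move=> e_sym e_tf xc yc; apply/negP => xy; apply: (e_tf x c y); rewrite // e_sym.
Qed.

Section Rotation.

Variables (T : finType) (e : rel T) (k : nat) (phi : 'I_(3 * k - 1) -> T).
Hypothesis phi_hom : forall i j, andrasfai k i j -> e (phi i) (phi j).
Variable s : 'I_(3 * k - 1).

Local Notation n := (3 * k - 1).

Definition rotate (m : nat) : 'I_n := insubd s ((m + s) %% n).

Lemma val_rotate m : m < n -> val (rotate m) = if m + s < n then m + s else m + s - n.
Proof.
move=> lt_m; have lt_s := ltn_ord s.
by rewrite val_insubd ltn_pmod ?modn_lt_double //; lia.
Qed.

Lemma rotate_hom : andrasfai_hom e k (phi \o rotate).
Proof.
move=> x y lt_x lt_y adj_xy; apply: phi_hom; rewrite andrasfaiE !val_rotate //.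
by move: adj_xy; rewrite /andrasfai_nat; case: (ltnP (x + s)); case: (ltnP (y + s)) => /=; lia.
Qed.

Lemma rotateK (t : 'I_n) : rotate ((t + n - s) %% n) = t.
Proof.
have lt_t := ltn_ord t; have lt_s := ltn_ord s.
apply: val_inj; rewrite val_insubd modnDml subnK ?modnDr ?modn_small ?lt_t //; lia.
Qed.

Lemma twin_rotate (t : 'I_n) u :
  H_twin e phi (phi t) u -> twin_at e k (phi \o rotate) ((t + n - s) %% n) u.
Proof. by move=> twin_u m _; rewrite /= rotateK twin_u. Qed.

End Rotation.

Section Insertion.

Variables (T : finType) (e : rel T) (k : nat) (P : nat -> T) (w z q : T).

(* Gamma_{k+1} is Gamma_k with [w], [z], [q] inserted at positions k, 2k+1, 3k+1. *)
Definition andrasfai_insert (j : nat) : T :=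
  if j < k then P j else if j == k then w else if j <= 2 * k then P j.-1
  else if j == 2 * k + 1 then z else if j <= 3 * k then P (j - 2) else q.

Variant andrasfai_insert_spec (j : nat) : T -> Prop :=
  | InsertLow of j < k : andrasfai_insert_spec j (P j)
  | InsertW of j = k : andrasfai_insert_spec j w
  | InsertMid of k < j <= 2 * k : andrasfai_insert_spec j (P j.-1)
  | InsertZ of j = 2 * k + 1 : andrasfai_insert_spec j z
  | InsertHigh of 2 * k + 1 < j <= 3 * k : andrasfai_insert_spec j (P (j - 2))
  | InsertQ of 3 * k < j : andrasfai_insert_spec j q.

Lemma andrasfai_insertP j : andrasfai_insert_spec j (andrasfai_insert j).
Proof.
rewrite /andrasfai_insert; case: ltnP => [|le_kj]; first exact: InsertLow.
case: eqP => [|ne_jk]; first exact: InsertW.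
case: leqP => [le_j2k | lt_2kj]; first by apply: InsertMid; lia.
case: eqP => [|ne_j]; first exact: InsertZ.
case: leqP => [le_j3k | lt_3kj]; first by apply: InsertHigh; lia.
exact: InsertQ.
Qed.

Hypotheses (e_sym : symmetric e) (P_hom : andrasfai_hom e k P).
Hypotheses (wz : e w z) (wq : e w q).
Hypotheses (zP : forall m, m < k -> e z (P m))
           (wP : forall m, 2 * k <= m <= 3 * k - 2 -> e w (P m))
           (qP : forall m, k <= m <= 2 * k - 1 -> e q (P m)).

Lemma andrasfai_insert_hom : andrasfai_hom e k.+1 andrasfai_insert.
Proof.
suff hom_lt i j : j < i -> i < 3 * k + 2 -> andrasfai_nat k.+1 i j ->
    e (andrasfai_insert i) (andrasfai_insert j).
  move=> i j lt_i lt_j adj_ij; case: (ltngtP i j) => [lt_ij | lt_ji | eq_ij].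
  - by rewrite e_sym; apply: hom_lt; rewrite 1?andrasfai_natC //; lia.
  - by apply: hom_lt => //; lia.
  - by move: adj_ij; rewrite eq_ij /andrasfai_nat; lia.
rewrite /andrasfai_nat => lt_ji lt_i adj_ij.
case: andrasfai_insertP => hi; case: andrasfai_insertP => hj; try lia.
all: first [ by apply: P_hom; rewrite /andrasfai_nat; lia
           | by apply: zP; lia | by apply: qP; lia
           | by rewrite e_sym; apply: wP; lia | by rewrite e_sym ].
Qed.

End Insertion.

Section Twins.

Variables (T : finType) (e : rel T) (k : nat) (P : nat -> T) (d : nat) (q z : T).
Hypotheses (e_sym : symmetric e) (e_irr : irreflexive e) (e_tf : triangle_free e).
Hypotheses (k_gt0 : 0 < k) (P_hom : andrasfai_hom e k P).
Hypotheses (q_twin : twin_at e k P 0 q) (z_twin : twin_at e k P d z) (nqz : ~~ e q z).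

Local Ltac arith := rewrite /andrasfai_nat; lia.

Lemma andrasfai_hom_nonadj x y c : x < 3 * k - 1 -> y < 3 * k - 1 -> c < 3 * k - 1 ->
  andrasfai_nat k x c -> andrasfai_nat k y c -> e (P x) (P y) = false.
Proof. by move=> *; apply: (nonadj_common_nbr (c := P c) e_sym e_tf); apply: P_hom. Qed.

Lemma twins_neq : k <= d <= 2 * k - 1 -> q != z.
Proof.
move=> hd; apply/eqP => eq_qz; case: (@e_tf (P 0) q (P d)).
- by rewrite e_sym eq_qz z_twin ?P_hom //; arith.
- by rewrite q_twin ?P_hom //; arith.
- by rewrite P_hom //; arith.
Qed.

Lemma twins_mid_cycle6 : k < d <= 2 * k - 2 ->
  exists phi : 'I_6 -> T, induced_copy cycle6 e phi.
Proof.
move=> hd; apply: (@induced_cycle6 _ e q (P k) (P (d + k)) z (P (d - k)) (P d.+1)) => //.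
- by rewrite q_twin ?P_hom //; arith.
- by rewrite P_hom //; arith.
- by rewrite e_sym z_twin ?P_hom //; arith.
- by rewrite z_twin ?P_hom //; arith.
- by rewrite P_hom //; arith.
- by rewrite e_sym q_twin ?P_hom //; arith.
- by rewrite q_twin ?(andrasfai_hom_nonadj (c := k)) //; arith.
- by rewrite q_twin ?(andrasfai_hom_nonadj (c := d.+1)) //; arith.
- by rewrite e_sym z_twin ?(andrasfai_hom_nonadj (c := d + k)) //; arith.
- by rewrite ?(andrasfai_hom_nonadj (c := 2 * k)) //; arith.
- by rewrite ?(andrasfai_hom_nonadj (c := 0)) //; arith.
- by rewrite ?(andrasfai_hom_nonadj (c := d)) //; arith.
- by rewrite ?(andrasfai_hom_nonadj (c := d - k + 1)) //; arith.
- by rewrite z_twin ?(andrasfai_hom_nonadj (c := 0)) //; arith.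
Qed.

Lemma twins_last_common_nbr w : d = 2 * k - 1 -> e w q -> e w z ->
  ~ (exists phi : 'I_6 -> T, induced_copy cycle6 e phi) ->
  forall r, 2 * k <= r <= 3 * k - 2 -> e w (P r).
Proof.
move=> hd wq wz noC6 r hr; apply: contraT => nwr; case: noC6.
apply: (@induced_cycle6 _ e w q (P k) (P r) (P k.-1) z) => //.
- by rewrite q_twin ?P_hom //; arith.
- by rewrite P_hom //; arith.
- by rewrite P_hom //; arith.
- by rewrite e_sym z_twin ?P_hom //; arith.
- by rewrite e_sym.
- by rewrite (nonadj_common_nbr e_sym e_tf wq) // e_sym q_twin ?P_hom //; arith.
- by rewrite (nonadj_common_nbr e_sym e_tf wz) // e_sym z_twin ?P_hom //; arith.
- by rewrite q_twin ?(andrasfai_hom_nonadj (c := k)) //; arith.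
- by rewrite q_twin ?(andrasfai_hom_nonadj (c := 2 * k - 1)) //; arith.
- by rewrite ?(andrasfai_hom_nonadj (c := r)) //; arith.
- by rewrite e_sym z_twin ?(andrasfai_hom_nonadj (c := 0)) //; arith.
- by rewrite e_sym z_twin ?(andrasfai_hom_nonadj (c := k.-1)) //; arith.
Qed.

Lemma twins_last_extend : d = 2 * k - 1 ->
  (forall x y, x != y -> ~~ e x y -> exists c, e x c && e c y) ->
  ~ (exists phi : 'I_6 -> T, induced_copy cycle6 e phi) ->
  exists G, andrasfai_hom e k.+1 G.
Proof.
move=> hd e_max noC6.
have [w /andP [qw wz]] := e_max q z (twins_neq ltac:(lia)) nqz.
have wq : e w q by rewrite e_sym.
exists (andrasfai_insert k P w z q); apply: andrasfai_insert_hom => // m hm.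
- by rewrite z_twin ?P_hom //; arith.
- exact: (twins_last_common_nbr hd wq wz noC6).
- by rewrite q_twin ?P_hom //; arith.
Qed.

End Twins.

Theorem lemma3p3 (k : nat) (T : finType) (e : rel T) :
  1 <= k -> classA e ->
  ~ (exists phi : 'I_(3 * k.+1 - 1) -> T, subgraph_copy (andrasfai k.+1) e phi) ->
  twin_property (andrasfai k) e.
Proof.
move=> k_gt0 [[e_sym e_irr] _ [e_tf e_max] noC6] noG.
have noG_hom : ~ exists G, andrasfai_hom e k.+1 G.
  by case=> G /(andrasfai_hom_copy e_tf) copyG; apply: noG; exists (fun i => G i).
pose n := 3 * k - 1.
suff twins_adj phi (a b : 'I_n) q z : subgraph_copy (andrasfai k) e phi ->
    H_twin e phi (phi a) q -> H_twin e phi (phi b) z ->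
    k < (b + n - a) %% n <= 2 * k - 2 \/ (b + n - a) %% n = 2 * k - 1 -> e q z.
  move=> phi copy a b ab q z twin_q twin_z.
  have [far | far] := andrasfai_orient ab; first exact: (twins_adj _ a b _ _ copy).
  by rewrite e_sym; apply: (twins_adj _ b a _ _ copy twin_z twin_q); right.
move=> [_ phi_hom] twin_q twin_z hd; apply: contraT => nqz.
have P_hom := rotate_hom phi_hom a.
have := twin_rotate a twin_q; rewrite addKn modnn => q_twin.
have z_twin := twin_rotate a twin_z.
case: hd => [mid | last].
- by case: noC6; apply: (twins_mid_cycle6 e_sym e_irr e_tf k_gt0 P_hom q_twin z_twin nqz).
- by case: noG_hom; apply: (twins_last_extend e_sym e_irr e_tf k_gt0 P_hom q_twin z_twin nqz).
Qed.
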